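(* Let $A$ be a Banach algebra such that $A^2=\mathrm{span}\{ab:a,b\in A\}$ is dense in $A$, and consider $A\bowtie^{\mathrm{id}}A$. A map $D:A\bowtie^{\mathrm{id}}A\to(A\bowtie^{\mathrm{id}}A)^*\cong A^*\oplus_\infty A^*$ is a bounded derivation if and only if there exist $D_1,D_2\in\mathcal Z^1(A,A^* )$ with $$D(a,b)=\big(D_1(a)+D_2(b),\ D_2(a)+D_2(b)\big)\qquad(a,b\in A).$$ Moreover, for $f,g\in A^*$, $D=\mathrm{ad}_{(f,g)}$ if and only if $D_1=\mathrm{ad}_f$ and $D_2=\mathrm{ad}_g$.
   Context: $A\bowtie^{\mathrm{id}}A$ is the Banach space $\{(a,b):a,b\in A\}$ with norm $\|a\|+\|b\|$ and product $(a,b)(a',b')=(aa',\ ab'+ba'+bb')$ (the amalgamation of $A$ with $A$ along $A$ with respect to the identity map). Its dual is identified with $A^*\oplus_\infty A^*$ via $\langle(a,b),(f,g)\rangle=f(a)+g(b)$. For a Banach algebra $C$, $C^*$ is a $C$-bimodule via $\langle c\cdot f,x\rangle=f(xc)$, $\langle f\cdot c,x\rangle=f(cx)$; $\mathcal Z^1(C,C^* )$ is the space of bounded derivations $D:C\to C^*$ ($D(xy)=x\cdot D(y)+D(x)\cdot y$), and $\mathrm{ad}_f(c)=c\cdot f-f\cdot c$ for $f\in C^*$. *)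

From Stdlib Require Import Reals.
From HB Require Import structures.
From mathcomp Require Import all_boot all_algebra.
Set Implicit Arguments. Unset Strict Implicit. Unset Printing Implicit Defensive.
Import GRing.Theory.
Local Open Scope ring_scope.

Definition is_absval (K : fieldType) (abs : K -> R) : Prop :=
  [/\ (forall x : K, Rle 0 (abs x)),
      (forall x : K, abs x = R0 <-> x = 0),
      (forall x y : K, abs (x * y) = Rmult (abs x) (abs y)) &
      (forall x y : K, Rle (abs (x + y)) (Rplus (abs x) (abs y)))].

Section Generic.
Variables (K : fieldType) (abs : K -> R).

Definition is_norm (V : lmodType K) (norm : V -> R) : Prop :=
  [/\ (forall x, Rle 0 (norm x)),
      (forall x, norm x = R0 -> x = 0),
      (forall (k : K) x, norm (k *: x) = Rmult (abs k) (norm x)) &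
      (forall x y, Rle (norm (x + y)) (Rplus (norm x) (norm y)))].

Definition cauchy_seq (V : lmodType K) (norm : V -> R) (u : nat -> V) : Prop :=
  forall eps : R, Rlt 0 eps -> exists N : nat,
    forall m n : nat, (N <= m)%N -> (N <= n)%N -> Rlt (norm (u m - u n)) eps.

Definition converges (V : lmodType K) (norm : V -> R) (u : nat -> V) : Prop :=
  exists l : V, forall eps : R, Rlt 0 eps -> exists N : nat,
    forall n : nat, (N <= n)%N -> Rlt (norm (u n - l)) eps.

Definition complete (V : lmodType K) (norm : V -> R) : Prop :=
  forall u : nat -> V, cauchy_seq norm u -> converges norm u.

Definition banach_algebra (A : lmodType K) (mul : A -> A -> A) (norm : A -> R)
  : Prop :=
  [/\ is_norm norm, complete norm,
      (forall x y, Rle (norm (mul x y)) (Rmult (norm x) (norm y))) &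
      [/\ (forall x y z, mul (mul x y) z = mul x (mul y z)),
      (forall (k : K) x y z, mul (k *: x + y) z = k *: mul x z + mul y z) &
      (forall (k : K) x y z, mul z (k *: x + y) = k *: mul z x + mul z y)]].

Definition in_span_products (A : lmodType K) (mul : A -> A -> A) (x : A) : Prop :=
  exists (n : nat) (k : 'I_n -> K) (a b : 'I_n -> A),
    x = \sum_(i < n) k i *: mul (a i) (b i).

Definition dense (A : lmodType K) (norm : A -> R) (S : A -> Prop) : Prop :=
  forall (x : A) (eps : R), Rlt 0 eps -> exists y, S y /\ Rlt (norm (x - y)) eps.

Definition is_dual (V : lmodType K) (norm : V -> R) (f : V -> K) : Prop :=
  (forall (k : K) x y, f (k *: x + y) = k * f x + f y) /\
  (exists M : R, forall x, Rle (abs (f x)) (Rmult M (norm x))).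

Definition lact (V : Type) (mul : V -> V -> V) (c : V) (f : V -> K) : V -> K :=
  fun x => f (mul x c).
Definition ract (V : Type) (mul : V -> V -> V) (f : V -> K) (c : V) : V -> K :=
  fun x => f (mul c x).

Definition ad (V : Type) (mul : V -> V -> V) (f : V -> K) (c : V) : V -> K :=
  fun x => lact mul c f x - ract mul f c x.

(* D : V -> V^dual is a bounded derivation, i.e. D is in Z^1(V, V^dual).
   Boundedness of D : V -> V^dual (operator norm on V^dual) is written out:
   |<D c, x>| <= M ||c|| ||x||. *)
Definition bounded_derivation (V : lmodType K) (mul : V -> V -> V) (norm : V -> R)
  (D : V -> V -> K) : Prop :=
  [/\ (forall c, is_dual norm (D c)),
      (forall (k : K) c c' x, D (k *: c + c') x = k * D c x + D c' x),
      (exists M : R, forall c x,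
          Rle (abs (D c x)) (Rmult (Rmult M (norm c)) (norm x))) &
      (forall c c' x, D (mul c c') x = lact mul c (D c') x + ract mul (D c) c' x)].

End Generic.

Section Amalgamation.
Variables (K : fieldType) (A : lmodType K) (mul : A -> A -> A) (norm : A -> R).

Definition amal_mul (c c' : A * A) : A * A :=
  (mul c.1 c'.1, mul c.1 c'.2 + mul c.2 c'.1 + mul c.2 c'.2).

Definition amal_norm (c : A * A) : R := Rplus (norm c.1) (norm c.2).

(* the identification A^dual (+)_oo A^dual -> (A ⋈ A)^dual : <(a,b),(f,g)> = f a + g b *)
Definition amal_pair (f g : A -> K) : A * A -> K := fun c => f c.1 + g c.2.

End Amalgamation.

From Stdlib Require Import Reals Lra FunctionalExtensionality.
From HB Require Import structures.
From mathcomp Require Import all_boot all_algebra ring.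
Set Implicit Arguments. Unset Strict Implicit. Unset Printing Implicit Defensive.
Import GRing.Theory.
Local Open Scope ring_scope.

(* A bounded derivation D of A ⋈ A restricts to bounded derivations D1 and D2
   of the isometric copies A × 0 and 0 × A.  The antidiagonal {(u, -u)} and
   0 × A annihilate each other, so by the derivation rule D (c c') z = 0
   whenever c, c' lie in one of them and z in the other: the bounded
   functionals u ↦ D (u, -u) (0, y) and u ↦ D (0, u) (x, -x) vanish on A^2,
   hence everywhere by density.  This says D (a, 0) (0, y) = D2 a y and
   D (0, b) (x, 0) = D2 b x, which is the formula.  The converse and the
   description of the inner derivations ad_(f,g) are direct expansions. *)

Section LinearFor.
Variables (K : pzRingType) (V : lmodType K) (W : zmodType).
Variables (s : GRing.Scale.law K W) (f : V -> W).
Hypothesis f_linear : linear_for s f.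

Let fL : {linear V -> W | s} := HB.pack f (GRing.isLinear.Build K V W s f f_linear).

Lemma linear_for0 : f 0 = 0. Proof. exact: (raddf0 fL). Qed.
Lemma linear_forD : {morph f : x y / x + y}. Proof. exact: (raddfD fL). Qed.
Lemma linear_forN : {morph f : x / - x}. Proof. exact: (raddfN fL). Qed.
Lemma linear_forB : {morph f : x y / x - y}. Proof. exact: (raddfB fL). Qed.
Lemma linear_forZ a : {morph f : x / a *: x >-> s a x}.
Proof. exact: (linearZ_LR fL). Qed.

End LinearFor.

Section Norms.
Variables (K : fieldType) (abs : K -> R).
Hypothesis abs_absval : is_absval abs.

Lemma absval1 : abs 1 = R1.
Proof.
have [_ abs_eq0 absM _] := abs_absval.
have abs1_neq0 : abs 1 <> R0 by move/abs_eq0/eqP; rewrite oner_eq0.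
apply: (Rmult_eq_reg_l (abs 1)) => //.
by rewrite -absM mulr1 Rmult_1_r.
Qed.

Lemma absvalN1 : abs (-1) = R1.
Proof.
have [abs_ge0 _ absM _] := abs_absval.
have sq : Rmult (abs (-1)) (abs (-1)) = R1 by rewrite -absM mulrNN mulr1 absval1.
have := abs_ge0 (-1); nra.
Qed.

Variables (V : lmodType K) (norm : V -> R).
Hypothesis norm_norm : is_norm abs norm.

Lemma normN x : norm (- x) = norm x.
Proof.
have [_ _ normZ _] := norm_norm.
by rewrite -scaleN1r normZ absvalN1 Rmult_1_l.
Qed.

Lemma norm0 : norm 0 = R0.
Proof.
have [abs_ge0 abs_eq0 _ _] := abs_absval; have [_ _ normZ _] := norm_norm.
by rewrite -(scale0r (0 : V)) normZ (proj2 (abs_eq0 0) erefl) Rmult_0_l.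
Qed.

Lemma additive_bounded_eq0_of_dense (S : V -> Prop) (h : V -> K) :
  dense norm S -> {morph h : x y / x + y} -> (forall y, S y -> h y = 0) ->
  (exists C, forall x, Rle (abs (h x)) (Rmult C (norm x))) ->
  forall x, h x = 0.
Proof.
move=> S_dense hD hS [C hC] x.
have [abs_ge0 abs_eq0 _ _] := abs_absval; have [norm_ge0 _ _ _] := norm_norm.
case: (Req_dec (abs (h x)) R0) => [/abs_eq0 // | hx_neq0].
have hx_gt0 : Rlt R0 (abs (h x)) by have := abs_ge0 (h x); lra.
have C1_gt0 : Rlt R0 (Rplus (Rabs C) R1) by have := Rabs_pos C; lra.
have [y [Sy xy_small]] := S_dense x _ (Rdiv_lt_0_compat _ _ hx_gt0 C1_gt0).
have hxy : h x = h (x - y) by rewrite -[h (x - y)]addr0 -(hS y Sy) -hD subrK.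
have := hC (x - y); rewrite -hxy.
have := Rmult_lt_compat_l _ _ _ C1_gt0 xy_small.
rewrite Rmult_div_assoc Rmult_div_r; last by lra.
have := Rle_abs C; have := norm_ge0 (x - y); nra.
Qed.

End Norms.

Lemma Rle_sum4_bound (M1 M2 a b x y t1 t2 t3 t4 : R) :
  Rle R0 M1 -> Rle R0 M2 -> Rle R0 a -> Rle R0 b -> Rle R0 x -> Rle R0 y ->
  Rle t1 (Rmult (Rmult M1 a) x) -> Rle t2 (Rmult (Rmult M2 b) x) ->
  Rle t3 (Rmult (Rmult M2 a) y) -> Rle t4 (Rmult (Rmult M2 b) y) ->
  Rle (Rplus (Rplus t1 t2) (Rplus t3 t4))
      (Rmult (Rmult (Rplus M1 M2) (Rplus a b)) (Rplus x y)).
Proof.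
move=> M1_ge0 M2_ge0 a_ge0 b_ge0 x_ge0 y_ge0 *.
have := Rmult_le_pos _ _ (Rmult_le_pos _ _ M2_ge0 a_ge0) x_ge0.
have := Rmult_le_pos _ _ (Rmult_le_pos _ _ M1_ge0 b_ge0) x_ge0.
have := Rmult_le_pos _ _ (Rmult_le_pos _ _ M1_ge0 a_ge0) y_ge0.
have := Rmult_le_pos _ _ (Rmult_le_pos _ _ M1_ge0 b_ge0) y_ge0.
lra.
Qed.

Lemma scalar_eq0_on_span_products (K : fieldType) (A : lmodType K)
    (mul : A -> A -> A) (h : A -> K) :
  scalar h -> (forall u v, h (mul u v) = 0) ->
  forall y, in_span_products mul y -> h y = 0.
Proof.
move=> h_scalar h_mul y [n [k [a [b ->]]]].
elim/big_ind: _ => [|y1 y2 hy1 hy2|i _]; first exact: linear_for0 h_scalar.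
  by rewrite (linear_forD h_scalar) hy1 hy2 addr0.
by rewrite (linear_forZ h_scalar) /= h_mul mulr0.
Qed.

Definition vanishes_on_axes (K : fieldType) (V : lmodType K) (B : V -> V -> K) :=
  (forall x, B 0 x = 0) /\ (forall c, B c 0 = 0).

Section Derivations.
Variables (K : fieldType) (abs : K -> R) (V : lmodType K).
Variables (mul : V -> V -> V) (norm : V -> R) (D : V -> V -> K).
Hypothesis D_derivation : bounded_derivation abs mul norm D.

Lemma bounded_derivation0l x : D 0 x = 0.
Proof.
have [_ D_linear _ _] := D_derivation.
exact: (linear_for0 (s := *%R) (fun k c c' => D_linear k c c' x)).
Qed.

Lemma bounded_derivation0r c : D c 0 = 0.
Proof. have [D_dual _ _ _] := D_derivation; exact: linear_for0 (proj1 (D_dual c)). Qed.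

Lemma bounded_derivation_vanishes_on_axes : vanishes_on_axes D.
Proof. by split=> [x | c]; rewrite ?bounded_derivation0l ?bounded_derivation0r. Qed.

Lemma bounded_derivation_annihilated c c' z :
  mul z c = 0 -> mul c' z = 0 -> D (mul c c') z = 0.
Proof.
have [_ _ _ leibniz] := D_derivation.
by move=> zc c'z; rewrite leibniz /lact /ract zc c'z !bounded_derivation0r addr0.
Qed.

Lemma bounded_derivation_bound_ge0 : (forall x, Rle R0 (norm x)) ->
  exists M, Rle R0 M /\
    forall c x, Rle (abs (D c x)) (Rmult (Rmult M (norm c)) (norm x)).
Proof.
have [_ _ [M DM] _] := D_derivation => norm_ge0.
exists (Rabs M); split=> [|c x]; first exact: Rabs_pos.
apply: Rle_trans (DM c x) _; apply: Rmult_le_compat_r => //.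
exact: Rmult_le_compat_r (Rle_abs M).
Qed.

End Derivations.

Section LinearImage.
Variables (K : fieldType) (abs : K -> R) (A B : lmodType K).
Variables (mulA : A -> A -> A) (mulB : B -> B -> B).
Variables (normA : A -> R) (normB : B -> R) (c : R) (L : A -> B).
Hypothesis abs_absval : is_absval abs.
Hypothesis normA_norm : is_norm abs normA.
Hypothesis products_dense : dense normA (in_span_products mulA).
Hypothesis L_linear : linear L.
Hypothesis L_multiplicative : {morph L : u v / mulA u v >-> mulB u v}.
Hypothesis L_norm : forall u, normB (L u) = Rmult c (normA u).
Variable D : B -> B -> K.
Hypothesis D_derivation : bounded_derivation abs mulB normB D.

Lemma bounded_derivation_restrict :
  bounded_derivation abs mulA normA (fun a x => D (L a) (L x)).
Proof.
have [D_dual D_linear [M DM] leibniz] := D_derivation.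
split=> [a | k a a' x | | a a' x].
- have [D_scalar [Ma DMa]] := D_dual (L a).
  split=> [k x x' | ]; first by rewrite L_linear D_scalar.
  by exists (Rmult Ma c) => x; rewrite Rmult_assoc -L_norm.
- by rewrite L_linear D_linear.
- exists (Rmult (Rmult M c) c) => a x; have := DM (L a) (L x).
  by rewrite !L_norm; lra.
- by rewrite L_multiplicative leibniz /lact /ract !L_multiplicative.
Qed.

(* [D (L (v * w)) z] vanishes by the derivation rule, so the bounded
   functional [u ↦ D (L u) z] vanishes on the dense subspace A^2. *)
Lemma bounded_derivation_annihilator_eq0 (z : B) :
  (forall u, mulB z (L u) = 0) -> (forall u, mulB (L u) z = 0) ->
  forall u, D (L u) z = 0.
Proof.
move=> zL Lz.
have [_ D_linear [M DM] _] := D_derivation.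
have DL_scalar : scalar (fun u => D (L u) z).
  by move=> k u u'; rewrite /= L_linear D_linear.
apply: (additive_bounded_eq0_of_dense abs_absval normA_norm products_dense).
- exact: linear_forD DL_scalar.
- apply: scalar_eq0_on_span_products DL_scalar _ => v w /=.
  by rewrite L_multiplicative (bounded_derivation_annihilated D_derivation).
- exists (Rmult (Rmult M c) (normB z)) => u; have := DM (L u) z.
  by rewrite L_norm; lra.
Qed.

End LinearImage.

Section Amalgamation.
Variables (K : fieldType) (A : lmodType K) (mul : A -> A -> A).
Hypothesis mul_linear_l : forall z, linear (mul^~ z).
Hypothesis mul_linear_r : forall z, linear (mul z).

Let mul0l z : mul 0 z = 0 := linear_for0 (mul_linear_l z).
Let mul0r z : mul z 0 = 0 := linear_for0 (mul_linear_r z).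
Let mulNl u z : mul (- u) z = - mul u z := linear_forN (mul_linear_l z) u.
Let mulNr u z : mul z (- u) = - mul z u := linear_forN (mul_linear_r z) u.

Definition amal_inl (a : A) : A * A := (a, 0).
Definition amal_inr (b : A) : A * A := (0, b).
Definition amal_antidiag (u : A) : A * A := (u, - u).

Lemma amal_inl_linear : linear amal_inl.
Proof. by move=> k u v; congr (_, _); rewrite /= scaler0 addr0. Qed.

Lemma amal_inr_linear : linear amal_inr.
Proof. by move=> k u v; congr (_, _); rewrite /= scaler0 addr0. Qed.

Lemma amal_antidiag_linear : linear amal_antidiag.
Proof. by move=> k u v; congr (_, _); rewrite /= scalerN opprD. Qed.

Lemma amal_mul_inl : {morph amal_inl : u v / mul u v >-> amal_mul mul u v}.
Proof. by move=> u v; rewrite /amal_mul /amal_inl /= !mul0l !mul0r !addr0. Qed.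

Lemma amal_mul_inr : {morph amal_inr : u v / mul u v >-> amal_mul mul u v}.
Proof. by move=> u v; rewrite /amal_mul /amal_inr /= !mul0l !mul0r !add0r. Qed.

Lemma amal_mul_antidiag :
  {morph amal_antidiag : u v / mul u v >-> amal_mul mul u v}.
Proof.
by move=> u v; congr (_, _); rewrite /= !mulNl !mulNr opprK subrK.
Qed.

Lemma amal_mul_antidiag_inr u w :
  amal_mul mul (amal_antidiag u) (amal_inr w) = 0.
Proof. by rewrite /amal_mul /= !mul0r mulNl addr0 subrr. Qed.

Lemma amal_mul_inr_antidiag w u :
  amal_mul mul (amal_inr w) (amal_antidiag u) = 0.
Proof. by rewrite /amal_mul /= !mul0l mulNr add0r subrr. Qed.

Definition amal_der (D1 D2 : A -> A -> K) : A * A -> A * A -> K :=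
  fun c => amal_pair (fun x => D1 c.1 x + D2 c.2 x) (fun y => D2 c.1 y + D2 c.2 y).

Lemma ad_vanishes_on_axes (f : A -> K) : vanishes_on_axes (ad mul f).
Proof. by split=> ?; rewrite /ad /lact /ract mul0l mul0r subrr. Qed.

Lemma ad_amal_pair (f g : A -> K) : {morph g : x y / x + y} ->
  forall c z,
    ad (amal_mul mul) (amal_pair f g) c z = amal_der (ad mul f) (ad mul g) c z.
Proof.
move=> gD [a b] [x y].
by rewrite /ad /lact /ract /amal_der /amal_pair /amal_mul /= !gD; ring.
Qed.

Lemma amal_der_eq (D1 D2 D1' D2' : A -> A -> K) :
  vanishes_on_axes D1 -> vanishes_on_axes D2 ->
  vanishes_on_axes D1' -> vanishes_on_axes D2' ->
  (forall c z, amal_der D1 D2 c z = amal_der D1' D2' c z) <->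
  D1 =2 D1' /\ D2 =2 D2'.
Proof.
move=> [D1_0l D1_0r] [D2_0l D2_0r] [D1'_0l D1'_0r] [D2'_0l D2'_0r].
rewrite /amal_der /amal_pair.
split=> [eqD | [eqD1 eqD2] [a b] [x y]]; last by rewrite /= !eqD1 !eqD2.
split=> a x.
- have := eqD (amal_inl a) (amal_inl x).
  by rewrite /= !D2_0l !D2_0r !D2'_0l !D2'_0r !addr0.
- have := eqD (amal_inr a) (amal_inr x).
  by rewrite /= D1_0l D1'_0l D2_0l D2_0r D2'_0l D2'_0r !add0r.
Qed.

Variables (abs : K -> R) (norm : A -> R).
Hypothesis abs_absval : is_absval abs.
Hypothesis norm_norm : is_norm abs norm.
Hypothesis products_dense : dense norm (in_span_products mul).

Lemma amal_norm_inl a : amal_norm norm (amal_inl a) = Rmult R1 (norm a).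
Proof. by rewrite /amal_norm /= (norm0 abs_absval norm_norm) Rplus_0_r Rmult_1_l. Qed.

Lemma amal_norm_inr b : amal_norm norm (amal_inr b) = Rmult R1 (norm b).
Proof. by rewrite /amal_norm /= (norm0 abs_absval norm_norm) Rplus_0_l Rmult_1_l. Qed.

Lemma amal_norm_antidiag u :
  amal_norm norm (amal_antidiag u) = Rmult (Rplus R1 R1) (norm u).
Proof. rewrite /amal_norm /= (normN abs_absval norm_norm); lra. Qed.

Section AmalDerivation.
Variable D : A * A -> A * A -> K.
Hypothesis D_derivation : bounded_derivation abs (amal_mul mul) (amal_norm norm) D.

Lemma amal_derivation_inl_inr a y :
  D (amal_inl a) (amal_inr y) = D (amal_inr a) (amal_inr y).
Proof.
have [_ D_linear _ _] := D_derivation.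
have := bounded_derivation_annihilator_eq0 abs_absval norm_norm products_dense
  amal_antidiag_linear amal_mul_antidiag amal_norm_antidiag D_derivation
  (amal_mul_inr_antidiag y) (amal_mul_antidiag_inr ^~ y) a.
have -> : amal_antidiag a = amal_inl a - amal_inr a.
  by congr (_, _); rewrite /= ?subr0 ?sub0r.
rewrite (linear_forB (s := *%R) (fun k c c' => D_linear k c c' _)).
by move/eqP; rewrite subr_eq0 => /eqP.
Qed.

Lemma amal_derivation_inr_inl b x :
  D (amal_inr b) (amal_inl x) = D (amal_inr b) (amal_inr x).
Proof.
have [D_dual _ _ _] := D_derivation.
have := bounded_derivation_annihilator_eq0 abs_absval norm_norm products_dense
  amal_inr_linear amal_mul_inr amal_norm_inr D_derivation
  (amal_mul_antidiag_inr x) (amal_mul_inr_antidiag ^~ x) b.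
have -> : amal_antidiag x = amal_inl x - amal_inr x.
  by congr (_, _); rewrite /= ?subr0 ?sub0r.
rewrite (linear_forB (proj1 (D_dual _))).
by move/eqP; rewrite subr_eq0 => /eqP.
Qed.

Lemma amal_derivation_decomposition c z :
  D c z = amal_der (fun a x => D (amal_inl a) (amal_inl x))
                   (fun b y => D (amal_inr b) (amal_inr y)) c z.
Proof.
have [D_dual D_linear _ _] := D_derivation.
case: c z => [a b] [x y].
have -> : (a, b) = amal_inl a + amal_inr b by congr (_, _); rewrite /= ?addr0 ?add0r.
have -> : (x, y) = amal_inl x + amal_inr y by congr (_, _); rewrite /= ?addr0 ?add0r.
rewrite (linear_forD (s := *%R) (fun k c c' => D_linear k c c' _)).
rewrite !(linear_forD (proj1 (D_dual _))).
rewrite amal_derivation_inl_inr amal_derivation_inr_inl /amal_der /amal_pair /=.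
by rewrite !addr0 !add0r addrACA.
Qed.

End AmalDerivation.

Lemma amal_der_bounded_derivation (D1 D2 : A -> A -> K) :
  bounded_derivation abs mul norm D1 -> bounded_derivation abs mul norm D2 ->
  bounded_derivation abs (amal_mul mul) (amal_norm norm) (amal_der D1 D2).
Proof.
move=> D1_derivation D2_derivation.
have [D1_dual D1_linear _ leibniz1] := D1_derivation.
have [D2_dual D2_linear _ leibniz2] := D2_derivation.
have [norm_ge0 _ _ _] := norm_norm; have [_ _ _ abs_triangle] := abs_absval.
have [M1 [M1_ge0 D1M]] := bounded_derivation_bound_ge0 D1_derivation norm_ge0.
have [M2 [M2_ge0 D2M]] := bounded_derivation_bound_ge0 D2_derivation norm_ge0.
have D2D z : {morph D2^~ z : u v / u + v} :=
  linear_forD (s := *%R) (fun k u v => D2_linear k u v z).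
have D2rD u : {morph D2 u : x y / x + y} := linear_forD (proj1 (D2_dual u)).
have bound c z : Rle (abs (amal_der D1 D2 c z))
    (Rmult (Rmult (Rplus M1 M2) (amal_norm norm c)) (amal_norm norm z)).
  case: c z => [a b] [x y].
  apply: Rle_trans (abs_triangle _ _) _.
  apply: Rle_trans (Rplus_le_compat _ _ _ _ (abs_triangle _ _) (abs_triangle _ _)) _.
  exact: Rle_sum4_bound.
split=> [c | k [a b] [a' b'] [x y] | | [a b] [a' b'] [x y]].
- split=> [k | ]; last by exists (Rmult (Rplus M1 M2) (amal_norm norm c)).
  case: c => [a b] [x y] [x' y'].
  by rewrite /amal_der /amal_pair /= !(proj1 (D1_dual _)) !(proj1 (D2_dual _)); ring.
- by rewrite /amal_der /amal_pair /= !D1_linear !D2_linear; ring.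
- by exists (Rplus M1 M2).
- rewrite /amal_der /amal_pair /lact /ract /amal_mul /= !D2D.
  by rewrite leibniz1 !leibniz2 /lact /ract !D2rD; ring.
Qed.

End Amalgamation.

Theorem proposition6p10 (K : fieldType) (abs : K -> R)
  (A : lmodType K) (mul : A -> A -> A) (norm : A -> R)
  (HK : is_absval abs)
  (HA : banach_algebra abs mul norm)
  (Hdense : dense norm (in_span_products mul)) :
  (forall D : A * A -> A * A -> K,
     bounded_derivation abs (amal_mul mul) (amal_norm norm) D <->
     exists D1 D2 : A -> A -> K,
       [/\ bounded_derivation abs mul norm D1,
           bounded_derivation abs mul norm D2 &
           forall a b x y : A,
             D (a, b) (x, y) = amal_pair (fun x => D1 a x + D2 b x)
                                         (fun y => D2 a y + D2 b y) (x, y)])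
  /\
  (forall (D : A * A -> A * A -> K) (D1 D2 : A -> A -> K),
     bounded_derivation abs mul norm D1 ->
     bounded_derivation abs mul norm D2 ->
     (forall a b x y : A,
        D (a, b) (x, y) = amal_pair (fun x => D1 a x + D2 b x)
                                    (fun y => D2 a y + D2 b y) (x, y)) ->
     forall f g : A -> K,
       is_dual abs norm f -> is_dual abs norm g ->
       ((forall c z, D c z = ad (amal_mul mul) (amal_pair f g) c z) <->
        ((forall a x, D1 a x = ad mul f a x) /\
         (forall a x, D2 a x = ad mul g a x)))).
Proof.
have [norm_norm _ _ [_ mulL mulR]] := HA.
have mul_l z : linear (mul^~ z) := fun k x y => mulL k x y z.
have mul_r z : linear (mul z) := fun k x y => mulR k x y z.
have amal_der_ext D D1 D2 :
    (forall a b x y, D (a, b) (x, y) = amal_der D1 D2 (a, b) (x, y)) ->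
    D = amal_der D1 D2.
  move=> eqD; apply: functional_extensionality => -[a b].
  by apply: functional_extensionality => -[x y]; exact: eqD.
split=> [D | D D1 D2 D1_der D2_der /amal_der_ext -> f g _ [g_scalar _]].
  split=> [D_der | [D1 [D2 [D1_der D2_der /amal_der_ext ->]]]].
    exists (fun a x => D (amal_inl a) (amal_inl x)),
           (fun b y => D (amal_inr b) (amal_inr y)).
    split=> [|| a b x y].
    - exact: (bounded_derivation_restrict (amal_inl_linear (A := A))
        (amal_mul_inl mul_l mul_r) (amal_norm_inl HK norm_norm) D_der).
    - exact: (bounded_derivation_restrict (amal_inr_linear (A := A))
        (amal_mul_inr mul_l mul_r) (amal_norm_inr HK norm_norm) D_der).
    - exact: (amal_derivation_decomposition mul_l mul_r HK norm_norm Hdense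
        D_der (a, b) (x, y)).
  exact: amal_der_bounded_derivation.
apply: iff_trans (amal_der_eq (bounded_derivation_vanishes_on_axes D1_der)
  (bounded_derivation_vanishes_on_axes D2_der) (ad_vanishes_on_axes mul_l mul_r f)
  (ad_vanishes_on_axes mul_l mul_r g)).
by split=> eqD c z; rewrite eqD (ad_amal_pair _ _ (linear_forD g_scalar)).
Qed.
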